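(* Let $r\ge1$, $t,s\ge0$ be integers and $\mathbf{u}=(u_1,\dots,u_r)\in\mathbb{Z}_+^r$. Let $\mathbf{u}+s=(u_1+s,\dots,u_r+s)$. Then $|\mathcal{A}_{t,s}(\mathbf{u})|\le|\mathcal{A}_{t,s}(\mathbf{u}+s)|$.
   Context: For $\mathbf{u}\in\mathbb{Z}_+^r$ (positive integers), $\mathcal{A}_{t,s}(\mathbf{u})=\{\mathbf{v}\in\mathbb{Z}_+^r:\ \sum_{i=1}^r\max\{0,u_i-v_i\}\le s,\ \sum_{i=1}^r\max\{0,v_i-u_i\}\le t\}$. *)

From mathcomp Require Import all_boot all_order.
From mathcomp Require Import boolp classical_sets cardinality.
Set Implicit Arguments. Unset Strict Implicit. Unset Printing Implicit Defensive.

(* Vectors in Z_+^r are r-tuples of nat with all entries >= 1.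
   max{0, a - b} on integers is truncated subtraction a - b on nat. *)
Definition pos_vec (r : nat) (v : r.-tuple nat) : Prop :=
  forall i : 'I_r, 0 < tnth v i.

Definition Aset (r t s : nat) (u : r.-tuple nat) : set (r.-tuple nat) :=
  [set v | pos_vec v /\
           (\sum_(i < r) (tnth u i - tnth v i) <= s) /\
           (\sum_(i < r) (tnth v i - tnth u i) <= t)].

Definition shift_vec (r s : nat) (u : r.-tuple nat) : r.-tuple nat :=
  [tuple tnth u i + s | i < r].

(* Translating every coordinate by the same amount k leaves each difference
   u_i - v_i unchanged, so v |-> v + k is an injection of A_{t,s}(u) into
   A_{t,s}(u + k); the theorem is the case k = s. *)
From mathcomp Require Import all_boot all_order.
From mathcomp Require Import boolp classical_sets cardinality.
Local Open Scope card_scope.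

Section ShiftVec.
Variables (r k : nat).

Lemma tnth_shift_vec (v : r.-tuple nat) i : tnth (shift_vec k v) i = tnth v i + k.
Proof. by rewrite tnth_mktuple. Qed.

Lemma shift_vec_inj : injective (@shift_vec r k).
Proof.
move=> v w eq_vw; apply: eq_from_tnth => i.
by apply/(@addIn k); rewrite -!tnth_shift_vec eq_vw.
Qed.

Lemma pos_vec_shift (v : r.-tuple nat) : pos_vec v -> pos_vec (shift_vec k v).
Proof. by move=> pos_v i; rewrite tnth_shift_vec addn_gt0 pos_v. Qed.

Lemma sum_subn_shift_vec (u v : r.-tuple nat) :
  \sum_(i < r) (tnth (shift_vec k u) i - tnth (shift_vec k v) i) =
  \sum_(i < r) (tnth u i - tnth v i).
Proof. by apply: eq_bigr => i _; rewrite !tnth_shift_vec subnDr. Qed.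

Lemma Aset_shift_vec (t s : nat) (u v : r.-tuple nat) :
  Aset t s u v -> Aset t s (shift_vec k u) (shift_vec k v).
Proof.
move=> [pos_v [le_uv le_vu]].
by split; [exact: pos_vec_shift | rewrite !sum_subn_shift_vec].
Qed.

Lemma Aset_card_le_shift (t s : nat) (u : r.-tuple nat) :
  Aset t s u #<= Aset t s (shift_vec k u).
Proof.
rewrite -(card_le_eql (inj_card_eq (in2W shift_vec_inj))).
by apply: subset_card_le => _ [v Av <-]; exact: Aset_shift_vec.
Qed.

End ShiftVec.

Theorem lemma1 (r t s : nat) (u : r.-tuple nat) :
  1 <= r -> pos_vec u ->
  Aset t s u #<= Aset t s (shift_vec s u).
Proof. by move=> _ _; exact: Aset_card_le_shift. Qed.
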